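(* Let $\ell$ be an odd integer with $\ell\equiv 3$ or $5 \pmod 8$, and let $t$ be a positive even integer. Let $G$ be the graph obtained from a cycle $C_\ell$ of length $\ell$ by attaching a path of length $t$ (i.e. with $t$ edges and $t$ new vertices) at one vertex of the cycle, so that one end of the path is identified with a cycle vertex. Then $G$ has $\ell+t$ vertices and $\mathrm{GP}(G)$ is not an integer.
   Context: All graphs are simple and finite. For a connected graph $G$, $d_G(u,v)$ denotes the shortest-path distance and $\mathrm{Aut}(G)$ the automorphism group. The Graovac-Pisanski index is $$\mathrm{GP}(G)=\frac{|V(G)|}{2|\mathrm{Aut}(G)|}\sum_{u\in V(G)}\sum_{\alpha\in \mathrm{Aut}(G)} d_G(u,\alpha(u)).$$ *)

From HB Require Import structures.
From mathcomp Require Import all_boot all_order all_algebra all_fingroup.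
Set Implicit Arguments. Unset Strict Implicit. Unset Printing Implicit Defensive.
Import Order.TTheory GRing.Theory Num.Theory.

(* A simple graph on a finite vertex type T is a (symmetric, irreflexive)
   adjacency relation e : rel T. *)

Fixpoint within (T : finType) (e : rel T) (k : nat) (u v : T) : bool :=
  match k with
  | 0 => u == v
  | k'.+1 => within e k' u v || [exists w, within e k' u w && e w v]
  end.

(* Shortest-path distance: least k with a walk of length <= k from u to v.
   (For connected graphs this is found among k < #|T|.) *)
Definition dist (T : finType) (e : rel T) (u v : T) : nat :=
  find (fun k => within e k u v) (iota 0 #|T|).

Definition graphAut (T : finType) (e : rel T) : {set {perm T}} :=
  [set s : {perm T} | [forall x, forall y, e (s x) (s y) == e x y]].

Definition GP (T : finType) (e : rel T) : rat :=
  ((#|T|%:R / (2 * #|graphAut e|)%N%:R) *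
   (\sum_(u : T) \sum_(a in graphAut e) dist e u (a u))%N%:R)%R.

(* The graph obtained from C_l (vertices 0..l-1) by attaching a path with t
   edges and new vertices l, ..., l+t-1 at cycle vertex 0:
   path 0 - l - (l+1) - ... - (l+t-1). *)
Definition cyc_step (l : nat) (i j : nat) : bool :=
  [&& i < l, j < l & j == i.+1 %% l].
Definition path_step (l : nat) (i j : nat) : bool :=
  ((i == 0) && (j == l)) || ((l <= i) && (j == i.+1)).
Definition cycle_path_adj (l t : nat) : rel 'I_(l + t) :=
  fun i j => [|| cyc_step l i j, cyc_step l j i, path_step l i j
              | path_step l j i].
Arguments cycle_path_adj : clear implicits.

(* The automorphisms of the graph are the identity and the reflection that fixes
   the pendant path and maps cycle vertex i to -i: an automorphism fixes the
   unique leaf, hence, walking down the path, every path vertex and the cycle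
   vertex 0; it then maps vertex 1 to a neighbour of 0 off the path, i.e. to 1
   or to -1, and walking around the cycle it is the identity or the reflection.
   The reflection moves i to -i, at cycle distance min(2i mod l, l - 2i mod l);
   since doubling permutes the residues modulo l = 2m+1, these distances add up
   to m(m+1). Hence GP = (l+t) m(m+1) / 4, and when l = 3, 5 (mod 8) and t is
   even, l+t is odd and m(m+1) = 2 (mod 4), so the numerator is 2 modulo 4. *)

From HB Require Import structures.
From mathcomp Require Import all_boot all_order all_algebra all_fingroup zify.
Import Order.TTheory GRing.Theory Num.Theory.

Set Implicit Arguments.
Unset Strict Implicit.
Unset Printing Implicit Defensive.

Section Walks.
Variables (T : finType) (e : rel T).

Lemma within_snoc k u w v : within e k u w -> e w v -> within e k.+1 u v.
Proof. by move=> uw wv /=; apply/orP; right; apply/existsP; exists w; rewrite uw wv. Qed.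

Lemma within_cat a b u w v :
  within e a u w -> within e b w v -> within e (a + b) u v.
Proof.
move=> uw; elim: b v => [|b IH] v /=; first by move/eqP <-; rewrite addn0.
rewrite addnS; case/orP => [wv | /existsP[w' /andP[ww' w'v]]].
  by rewrite /= IH.
exact: within_snoc (IH _ ww') w'v.
Qed.

Lemma within_sym k u v : symmetric e -> within e k u v -> within e k v u.
Proof.
move=> e_sym; elim: k v => [|k IH] v; first by rewrite /= eq_sym.
case/orP => [uv | /existsP[w /andP[uw wv]]]; first by apply/orP; left; apply: IH.
have vw : within e 1 v w by apply: (@within_snoc 0 v v w) => //=; rewrite e_sym.
by rewrite -add1n; apply: within_cat vw (IH _ uw); rewrite e_sym.
Qed.

Lemma within_potential (f : T -> nat) u k v :
  f u = 0 -> (forall w w', e w w' -> f w' <= (f w).+1) ->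
  within e k u v -> f v <= k.
Proof.
move=> fu0 f_lip; elim: k v => [|k IH] v /=; first by move/eqP <-; rewrite fu0.
case/orP => [uv | /existsP[w /andP[uw wv]]]; first by have := IH _ uv; lia.
by have := IH _ uw; have := f_lip _ _ wv; lia.
Qed.

Lemma dist_refl u : dist e u u = 0.
Proof. by rewrite /dist; case: #|T| (max_card (pred1 u)) => //= n; rewrite eqxx. Qed.

Lemma dist_eq (f : T -> nat) u v d :
  f u = 0 -> (forall w w', e w w' -> f w' <= (f w).+1) ->
  within e d u v -> d <= f v -> d < #|T| -> dist e u v = d.
Proof.
move=> fu0 f_lip uv dfv dT; rewrite /dist (_ : #|T| = d + (#|T| - d)); last by lia.
rewrite iotaD find_cat.
have -> : has (fun k => within e k u v) (iota 0 d) = false.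
  apply/hasP => -[k]; rewrite mem_iota add0n => /andP[_ kd] ukv.
  by have := within_potential fu0 f_lip ukv; lia.
by rewrite size_iota add0n -(subnSK dT) /= uv addn0.
Qed.

End Walks.

Lemma graphAutP (T : finType) (e : rel T) (r : {perm T}) :
  reflect (forall x y, e (r x) (r y) = e x y) (r \in graphAut e).
Proof.
rewrite inE; apply: (iffP forallP) => [H x y | H x].
  by have /forallP /(_ y) /eqP := H x.
by apply/forallP => y; rewrite H.
Qed.

Lemma graphAutM (T : finType) (e : rel T) (r s : {perm T}) :
  r \in graphAut e -> s \in graphAut e -> (r * s)%g \in graphAut e.
Proof.
by move=> /graphAutP Hr /graphAutP Hs; apply/graphAutP => x y; rewrite !permM Hs Hr.
Qed.

Section AutomorphismFixpoints.
Variables (T : finType) (e : rel T) (r : {perm T}).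
Hypothesis r_aut : r \in graphAut e.

Lemma aut_adj x y : e (r x) (r y) = e x y.
Proof. by move/graphAutP: r_aut. Qed.

Lemma aut_preimage_leaf x :
  (forall p q, e (r x) p -> e (r x) q -> p = q) ->
  forall p q, e x p -> e x q -> p = q.
Proof.
move=> leaf p q; rewrite -!(aut_adj x) => xp xq.
exact/perm_inj/(leaf _ _ xp xq).
Qed.

Lemma aut_fix_nbr (F : pred T) a c :
  r a = a -> {in F, forall x, r x = x} ->
  (forall y, e a y -> y = c \/ y \in F) -> e a c -> r c = c.
Proof.
move=> ra fixF nbrs ac.
have : e a (r c) by rewrite -{1}ra aut_adj.
by case/nbrs => // rcF; apply: (@perm_inj _ r); rewrite (fixF _ rcF).
Qed.

Lemma aut_fix_chain (f : nat -> T) n :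
  r (f 0) = f 0 -> r (f 1) = f 1 ->
  (forall k, 0 < k < n ->
     e (f k) (f k.+1) /\ forall y, e (f k) y -> y = f k.+1 \/ y = f k.-1) ->
  forall k, k <= n -> r (f k) = f k.
Proof.
move=> f0 f1 chain.
suff fix2 k : k < n -> r (f k) = f k /\ r (f k.+1) = f k.+1.
  by case=> [|k] // /fix2[].
elim: k => [|k IH] kn; first by [].
have [fk fk1] := IH (ltnW kn); split => //.
have [adj nbrs] := chain k.+1 kn.
apply: (aut_fix_nbr (F := pred1 (f k))) adj => // [y /eqP -> // | y].
by case/nbrs => [|->]; [left | right; rewrite inE].
Qed.

End AutomorphismFixpoints.

Definition cycle_gap (l i j : nat) := (j + l - i) %% l.
Definition cycle_dist (l i j : nat) := minn (cycle_gap l i j) (cycle_gap l j i).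

Definition mirror (l k : nat) := if k == 0 then 0 else if k < l then l - k else k.

Lemma cycle_gapE l i j : i < l -> j < l ->
  cycle_gap l i j = if i <= j then j - i else j + l - i.
Proof.
rewrite /cycle_gap => il jl; case: ifP => ij; last by rewrite modn_small //; lia.
by rewrite (_ : j + l - i = j - i + l) ?modnDr ?modn_small //; lia.
Qed.

Lemma mirrorK l : involutive (mirror l).
Proof. by move=> k; rewrite /mirror; repeat case: ifP; lia. Qed.

Lemma modn_double l i : i < l -> (2 * i) %% l = if 2 * i < l then 2 * i else 2 * i - l.
Proof.
move=> il; case: ifP => h; first by rewrite modn_small.
by rewrite {1}(_ : 2 * i = 2 * i - l + l) ?modnDr ?modn_small //; lia.
Qed.

Lemma cycle_dist_mirror l i : i < l ->
  cycle_dist l i (mirror l i) = minn ((2 * i) %% l) (l - (2 * i) %% l).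
Proof.
move=> il; have ml : mirror l i < l by rewrite /mirror; repeat case: ifP; lia.
by rewrite /cycle_dist !cycle_gapE // modn_double // /mirror; repeat case: ifP; lia.
Qed.

Lemma sum_minn_sub_odd m :
  \sum_(k < (m.*2).+1) minn k ((m.*2).+1 - k) = m * m.+1.
Proof.
elim: m => [|m IH]; first by rewrite big_ord_recl big_ord0.
rewrite doubleS big_ord_recl big_ord_recr /=.
rewrite (eq_bigr (fun i : 'I_(m.*2).+1 => minn i ((m.*2).+1 - i) + 1)).
  by rewrite big_split /= IH sum1_card card_ord /bump /= !mulSn !mulnS; lia.
by move=> i _; rewrite /bump /=; have := ltn_ord i; lia.
Qed.

(* Doubling permutes the residues modulo an odd [l]. *)
Lemma sum_cycle_dist_mirror l : odd l ->
  \sum_(i < l) cycle_dist l i (mirror l i) = l./2 * (l./2).+1.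
Proof.
move=> l_odd; have l_eq : l = (l./2).*2.+1 by rewrite -[LHS]odd_double_half l_odd.
have l_gt0 : 0 < l by rewrite l_eq.
rewrite (eq_bigr _ (fun i _ => cycle_dist_mirror (ltn_ord i))).
pose dbl (i : 'I_l) : 'I_l := Ordinal (ltn_pmod (2 * i) l_gt0).
have dbl_inj : injective dbl.
  move=> i j /(congr1 val) /=; rewrite !modn_double // => ij; apply: ord_inj.
  by move: ij; have := ltn_ord i; have := ltn_ord j; repeat case: ifP; lia.
rewrite -(sum_minn_sub_odd l./2) -l_eq [RHS](reindex_inj dbl_inj).
by apply: eq_bigr.
Qed.

Definition cycle_path_adjn (l x y : nat) : bool :=
  [|| [&& x < l, y < l & (y == x.+1) || (x == y.+1)],
      (x == 0) && (y.+1 == l), (y == 0) && (x.+1 == l),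
      (x == 0) && (y == l), (y == 0) && (x == l),
      (l <= x) && (y == x.+1) | (l <= y) && (x == y.+1)].

Lemma cyc_stepE l i j :
  cyc_step l i j = [&& i < l, j < l & if i.+1 == l then j == 0 else j == i.+1].
Proof.
rewrite /cyc_step; case: (ltnP i l) => //= il; case: (i.+1 =P l) => [->|ne].
  by rewrite modnn.
by rewrite modn_small //; lia.
Qed.

Lemma cyc_step_mirror l i j : cyc_step l (mirror l i) (mirror l j) = cyc_step l j i.
Proof. by rewrite !cyc_stepE /mirror; repeat case: ifP; lia. Qed.

Lemma path_step_mirror l i j : 0 < l ->
  path_step l (mirror l i) (mirror l j) = path_step l i j.
Proof. by move=> l_gt0; rewrite /path_step /mirror; repeat case: ifP; lia. Qed.

Section CyclePath.
Variables l t : nat.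
Hypotheses (l_gt2 : 2 < l) (t_gt0 : 0 < t).
Local Notation V := 'I_(l + t).
Local Notation G := (cycle_path_adj l t).

Let l_gt0 : 0 < l := ltnW (ltnW l_gt2).

Lemma cycle_path_adjE (x y : V) : G x y = cycle_path_adjn l x y.
Proof.
rewrite /cycle_path_adj !cyc_stepE /path_step /cycle_path_adjn.
by do 2 case: ifP; lia.
Qed.

Lemma cycle_path_adj_sym : symmetric G.
Proof.
move=> x y; rewrite /cycle_path_adj.
by case: (cyc_step l x y); case: (cyc_step l y x);
   case: (path_step l x y); case: (path_step l y x).
Qed.

Lemma cycle_path_size_gt0 : 0 < l + t. Proof. by lia. Qed.

Definition vert (k : nat) : V := insubd (Ordinal cycle_path_size_gt0) k.

Lemma vertK k : k < l + t -> vert k = k :> nat.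
Proof. by move=> kl; rewrite /vert val_insubd kl. Qed.

Lemma vert_val (x : V) : vert x = x.
Proof. exact: valKd. Qed.

Lemma vert_adj a b : a < l + t -> b < l + t -> G (vert a) (vert b) = cycle_path_adjn l a b.
Proof. by move=> al bl; rewrite cycle_path_adjE !vertK. Qed.

Lemma vert_nbrs a b c : a < l + t ->
  (forall y, y < l + t -> cycle_path_adjn l a y -> y = b \/ y = c) ->
  forall y : V, G (vert a) y -> y = vert b \/ y = vert c.
Proof.
move=> al nbrs y; rewrite -(vert_val y) vert_adj // => /(nbrs _ (ltn_ord y)).
by case=> ->; [left | right].
Qed.

Lemma leaf_unique x : x < l + t ->
  (forall p q, G (vert x) p -> G (vert x) q -> p = q) -> x = (l + t).-1.
Proof.
move=> xl leaf; apply/eqP/negPn/negP => x_ne.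
pose p := if x == 0 then 1 else if x < l then x.-1 else x.+1.
pose q := if x == 0 then l else if x < l then (if x.+1 == l then 0 else x.+1)
          else if x == l then 0 else x.-1.
have [pl ql] : p < l + t /\ q < l + t by rewrite /p /q; repeat case: ifP; lia.
have /(congr1 (@nat_of_ord _)) : vert p = vert q.
  by apply: leaf; rewrite vert_adj // /cycle_path_adjn /p /q;
     repeat case: ifP; lia.
by rewrite !vertK // /p /q; repeat case: ifP; lia.
Qed.

Section Automorphism.
Variable r : {perm V}.
Hypothesis r_aut : r \in graphAut G.

Lemma aut_fix_leaf : r (vert (l + t).-1) = vert (l + t).-1.
Proof.
have leafE : (r^-1)%g (vert (l + t).-1) = vert (l + t).-1.
  rewrite -[LHS]vert_val; congr vert; apply: leaf_unique; rewrite ?vert_val // ?ltn_ord.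
  apply: (aut_preimage_leaf r_aut) => p q; rewrite permKV !cycle_path_adjE vertK; last by lia.
  move: (ltn_ord p) (ltn_ord q); rewrite /cycle_path_adjn => pl ql adj_p adj_q.
  by apply: ord_inj; lia.
by rewrite -{1}leafE permKV.
Qed.

(* The path read from its free end down to the cycle vertex [0]. *)
Definition tail_vert k := vert (if k < t then (l + t).-1 - k else 0).

Lemma aut_fix_tail k : k <= t -> r (tail_vert k) = tail_vert k.
Proof.
have tail_lt k' : (if k' < t then (l + t).-1 - k' else 0) < l + t by case: ifP; lia.
have leaf_nbr y : G (tail_vert 0) y -> y = tail_vert 1.
  rewrite /tail_vert -(vert_val y) vert_adj ?tail_lt // => adj; congr vert.
  by move: adj (ltn_ord y); rewrite /cycle_path_adjn; repeat case: ifP; lia.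
have f0 : r (tail_vert 0) = tail_vert 0 by rewrite /tail_vert t_gt0 subn0 aut_fix_leaf.
apply: (@aut_fix_chain _ _ r r_aut tail_vert t) => [//||k' k't].
- apply: (aut_fix_nbr (F := pred0) r_aut f0) => // [y /leaf_nbr ->|]; first by left.
  by rewrite /tail_vert vert_adj ?tail_lt // /cycle_path_adjn; repeat case: ifP; lia.
- split.
    by rewrite /tail_vert vert_adj ?tail_lt // /cycle_path_adjn; repeat case: ifP; lia.
  by apply: vert_nbrs => // y _; rewrite /cycle_path_adjn; repeat case: ifP; lia.
Qed.

Lemma aut_fix_zero : r (vert 0) = vert 0.
Proof. by have := aut_fix_tail (leqnn t); rewrite /tail_vert ltnn. Qed.

Lemma aut_fix_path_vert k : l <= k < l + t -> r (vert k) = vert k.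
Proof.
move=> /andP[lk kl]; have k'_lt : (l + t).-1 - k < t by lia.
have := aut_fix_tail (ltnW k'_lt); rewrite /tail_vert k'_lt.
by rewrite (_ : (l + t).-1 - ((l + t).-1 - k) = k) //; lia.
Qed.

Lemma aut_vert1 : r (vert 1) = vert 1 \/ r (vert 1) = vert l.-1.
Proof.
have : G (vert 0) (r (vert 1)).
  by rewrite -{1}aut_fix_zero aut_adj // vert_adj // /cycle_path_adjn; lia.
have : nat_of_ord (r (vert 1)) != l.
  apply/eqP => r1; have : r (vert 1) = r (vert l).
    by rewrite [r (vert l)]aut_fix_path_vert; [apply: ord_inj; rewrite r1 vertK | ]; lia.
  by move/perm_inj/(congr1 (@nat_of_ord _)); rewrite !vertK; lia.
rewrite cycle_path_adjE vertK /cycle_path_adjn => [ne adj|]; last by lia.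
have [E|E] : nat_of_ord (r (vert 1)) = 1 \/ nat_of_ord (r (vert 1)) = l.-1 by lia.
  by left; apply: ord_inj; rewrite E vertK; lia.
by right; apply: ord_inj; rewrite E vertK; lia.
Qed.

Lemma aut_fix_cycle : r (vert 1) = vert 1 -> r = 1%g.
Proof.
move=> fix1; have fix_cyc k : k <= l.-1 -> r (vert k) = vert k.
  apply: (@aut_fix_chain _ _ r r_aut vert l.-1) => // [|k' k'_lt].
    exact: aut_fix_zero.
  split; first by rewrite vert_adj /cycle_path_adjn; lia.
  by apply: vert_nbrs => [|y _]; rewrite /cycle_path_adjn; lia.
apply/permP => x; rewrite perm1 -(vert_val x).
case: (ltnP x l) => xl; first by apply: fix_cyc; lia.
by apply: aut_fix_path_vert; rewrite xl ltn_ord.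
Qed.

End Automorphism.

Lemma mirror_lt (x : V) : mirror l x < l + t.
Proof. by rewrite /mirror; have := ltn_ord x; repeat case: ifP; lia. Qed.

Definition mirror_vert (x : V) := vert (mirror l x).

Lemma mirror_vertK : involutive mirror_vert.
Proof. by move=> x; apply: ord_inj; rewrite !vertK ?mirror_lt // mirrorK. Qed.

Definition reflection : {perm V} := perm (inv_inj mirror_vertK).

Lemma reflectionE x : reflection x = vert (mirror l x).
Proof. by rewrite permE. Qed.

Lemma reflectionK x : reflection (reflection x) = x.
Proof. by rewrite !permE mirror_vertK. Qed.

Lemma reflection_aut : reflection \in graphAut G.
Proof.
apply/graphAutP => x y; rewrite !reflectionE /cycle_path_adj !vertK ?mirror_lt //.
rewrite !cyc_step_mirror !(path_step_mirror _ _ l_gt0).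
by case: (cyc_step l x y); case: (cyc_step l y x).
Qed.

Lemma reflection_neq1 : reflection != 1%g.
Proof.
have m1 : mirror l 1 = l.-1 by rewrite /mirror /=; case: ifP; lia.
apply/eqP => /permP/(_ (vert 1)); rewrite perm1 reflectionE vertK ?m1; last by lia.
by move/(congr1 (@nat_of_ord _)); rewrite !vertK; lia.
Qed.

Lemma graphAut_cycle_path : graphAut G = [set 1%g; reflection].
Proof.
apply/setP => s; rewrite in_set2; apply/idP/idP => [s_aut | /orP[] /eqP ->].
- case: (aut_vert1 s_aut) => s1; first by rewrite (aut_fix_cycle s_aut s1) eqxx.
  have /permP sr : (s * reflection)%g = 1%g.
    apply: aut_fix_cycle; first exact: graphAutM s_aut reflection_aut.
    by rewrite permM s1 reflectionE; congr vert; rewrite vertK /mirror; repeat case: ifP; lia.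
  apply/orP; right; apply/eqP/permP => x.
  by have := sr x; rewrite permM perm1 => E; rewrite -{2}E reflectionK.
- by apply/graphAutP => x y; rewrite !perm1.
- exact: reflection_aut.
Qed.

Lemma within_cycle_fwd i d : i < l -> within G d (vert i) (vert ((i + d) %% l)).
Proof.
have mod_lt k : k %% l < l + t by have := ltn_pmod k l_gt0; lia.
move=> il; elim: d => [|d IH]; first by rewrite addn0 modn_small //= eqxx.
apply: (within_snoc IH); rewrite /cycle_path_adj !vertK //.
apply/orP; left; rewrite /cyc_step !ltn_pmod //=.
by rewrite -[((i + d) %% l).+1]addn1 modnDml addn1 addnS.
Qed.

Lemma within_cycle_gap i j : i < l -> j < l ->
  within G (cycle_gap l i j) (vert i) (vert j).
Proof.
move=> il jl; have := within_cycle_fwd (cycle_gap l i j) il.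
suff -> : (i + cycle_gap l i j) %% l = j by [].
by rewrite /cycle_gap modnDmr (_ : i + (j + l - i) = j + l) ?modnDr ?modn_small //; lia.
Qed.

Lemma within_cycle_dist i j : i < l -> j < l ->
  within G (cycle_dist l i j) (vert i) (vert j).
Proof.
move=> il jl; rewrite /cycle_dist /minn; case: ifP => _; first exact: within_cycle_gap.
by apply: within_sym; [exact: cycle_path_adj_sym | exact: within_cycle_gap].
Qed.

(* Distance to [u] along the cycle, continued along the path through [0]. *)
Definition cycle_path_potential (u v : nat) :=
  cycle_dist l u (if v < l then v else 0) + (if v < l then 0 else v - l + 1).

Lemma cycle_path_potential_lip u w v : u < l -> cycle_path_adjn l w v ->
  cycle_path_potential u v <= (cycle_path_potential u w).+1.
Proof.
move=> ul; rewrite /cycle_path_potential /cycle_path_adjn.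
case: (ltnP v l) => vl; case: (ltnP w l) => wl;
  rewrite /= /cycle_dist !cycle_gapE // ?leq0n /=; repeat case: ifP; lia.
Qed.

Lemma dist_cycle (x y : V) : x < l -> y < l -> dist G x y = cycle_dist l x y.
Proof.
move=> xl yl; apply: (dist_eq (f := fun v : V => cycle_path_potential x v)).
- by rewrite /cycle_path_potential xl addn0 /cycle_dist cycle_gapE // leqnn subnn.
- by move=> w v; rewrite cycle_path_adjE; apply: cycle_path_potential_lip.
- by have := within_cycle_dist xl yl; rewrite !vert_val.
- by rewrite /cycle_path_potential yl addn0.
- by rewrite card_ord /cycle_dist !cycle_gapE //; repeat case: ifP; lia.
Qed.

Lemma sum_dist_graphAut : odd l ->
  \sum_(u : V) \sum_(a in graphAut G) dist G u (a u) = l./2 * (l./2).+1.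
Proof.
move=> l_odd; have inner u :
    \sum_(a in [set 1%g; reflection]) dist G u (a u) = dist G u (reflection u).
  by rewrite big_setU1 ?inE 1?eq_sym ?reflection_neq1 //= big_set1 perm1 dist_refl.
rewrite graphAut_cycle_path (eq_bigr _ (fun u _ => inner u)) big_split_ord /=.
rewrite [X in _ + X]big1 => [|i _]; last first.
  suff -> : reflection (rshift l i) = rshift l i by exact: dist_refl.
  rewrite reflectionE; apply: ord_inj; rewrite vertK ?mirror_lt //= /mirror.
  by have := ltn_ord i; repeat case: ifP; lia.
rewrite addn0 -(sum_cycle_dist_mirror l_odd); apply: eq_bigr => i _.
have mirror_i : mirror l i < l by rewrite /mirror; have := ltn_ord i; repeat case: ifP; lia.
by rewrite reflectionE dist_cycle /= ?vertK //; lia.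
Qed.

End CyclePath.

Lemma GP_cycle_path l t : odd l -> 2 < l -> 0 < t ->
  GP (cycle_path_adj l t) = (((l + t) * (l./2 * (l./2).+1))%N%:R / 4%:R)%R.
Proof.
move=> l_odd l_gt2 t_gt0.
rewrite /GP card_ord sum_dist_graphAut // graphAut_cycle_path // cards2 eq_sym.
by rewrite reflection_neq1 // mulrAC -natrM.
Qed.

Lemma nat_div4_Nint n : n %% 4 = 2 -> (n%:R / 4%:R : rat)%R \notin Num.int.
Proof.
move=> n_mod4; apply/negP => /intrP[z nz].
have : (n%:R = (z * 4)%:~R :> rat)%R by rewrite intrM -nz divfK // pnatr_eq0.
by rewrite pmulrn => /intr_inj; lia.
Qed.

Lemma cycle_path_GP_numerator_mod4 l t : odd l -> (l %% 8 = 3 \/ l %% 8 = 5) ->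
  ~~ odd t -> ((l + t) * (l./2 * (l./2).+1)) %% 4 = 2.
Proof.
move=> l_odd l_mod8 t_even.
have := odd_double_half l; have := odd_double_half t; rewrite l_odd (negbTE t_even).
move=> t_eq l_eq; rewrite -modnMm -(modnMm l./2).
have size_mod4 : (l + t) %% 4 = 1 \/ (l + t) %% 4 = 3 by lia.
have half_mod4 : l./2 %% 4 = 1 /\ (l./2).+1 %% 4 = 2 \/
                 l./2 %% 4 = 2 /\ (l./2).+1 %% 4 = 3 by lia.
by case: size_mod4 => ->; case: half_mod4 => -[-> ->].
Qed.

Theorem theorem4p1 (l t : nat) :
  odd l -> (l %% 8 = 3 \/ l %% 8 = 5) -> 0 < t -> ~~ odd t ->
  #|'I_(l + t)| = l + t /\ GP (cycle_path_adj l t) \notin Num.int.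
Proof.
move=> l_odd l_mod8 t_gt0 t_even; split; first exact: card_ord.
rewrite GP_cycle_path //; last by lia.
exact/nat_div4_Nint/cycle_path_GP_numerator_mod4.
Qed.
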